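(* Let $0<\mu<1$, $0\le\lambda<1$, and let $I_\theta$ be the function defined for $x\in(0,1)$ by $$I_\theta(x)=-x\log\left[\frac{\mu+\bar\mu\lambda}{1-2\bar x/(\sqrt\Delta+1)}\right]-\bar x\log\left[\frac{\bar\mu+\mu\lambda}{1-2x/(\sqrt\Delta+1)}\right],\qquad \Delta=1+\frac{4\lambda x\bar x}{\mu\bar\mu(1-\lambda)^2},$$ with $\bar\mu=1-\mu$, $\bar x=1-x$. Then for all $x\in(0,1)$, $$I_\theta(x)\ge 2\,\frac{1-\lambda}{1+\lambda}\,(x-\mu)^2.$$ Moreover, for $x\ne\mu$, the function $g(x)=I_\theta(x)/(x-\mu)^2$ attains its global minimum over $(0,1)\setminus\{\mu\}$ at $x=\bar\mu$ (when $\mu\neq1/2$). *)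

From Stdlib Require Import Reals Lra.
Open Scope R_scope.

Definition Delta (mu lam x : R) : R :=
  1 + 4 * lam * x * (1 - x) / (mu * (1 - mu) * (1 - lam) ^ 2).

Definition I_theta (mu lam x : R) : R :=
  - x * ln ((mu + (1 - mu) * lam) / (1 - 2 * (1 - x) / (sqrt (Delta mu lam x) + 1)))
  - (1 - x) * ln (((1 - mu) + mu * lam) / (1 - 2 * x / (sqrt (Delta mu lam x) + 1))).

Definition g_ratio (mu lam x : R) : R := I_theta mu lam x / (x - mu) ^ 2.

(* Write kappa = (1 - lam) / (1 + lam) and Y x = 1/2 + kappa (x - 1/2), so that
   (1 + lam) Y mu and (1 + lam) (1 - Y mu) are the numerators in I_theta.  The key
   fact is I_theta x >= KL(Y x || Y mu) / kappa, with KL the Bernoulli relative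
   entropy: the difference vanishes at mu and at 1 - mu (where sqrt Delta = 1/kappa),
   and its derivative has the sign of (1 - 2x) (x (1 - x) - mu (1 - mu)), so it grows
   away from whichever of mu, 1 - mu lies on the same side of 1/2 as x.
   Since Y x - Y mu = kappa (x - mu), Pinsker's inequality KL(y || p) >= 2 (y - p)^2
   gives the first bound.  The sharp form KL(y || p) >= phi p (y - p)^2 with
   phi p = ln ((1 - p) / p) / (1 - 2 p) (Ordentlich-Weinberger) gives
   g x >= kappa phi (Y mu), and this is attained at x = 1 - mu because
   Y (1 - mu) = 1 - Y mu and KL(1 - p || p) = phi p (1 - 2 p)^2. *)

From Pilot Require Import Defs.
From Coquelicot Require Import Coquelicot.
From Stdlib Require Import Reals Lra.
Open Scope R_scope.

Lemma mvt_between (f f' : R -> R) (a b : R) :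
  (forall t, Rmin a b <= t <= Rmax a b -> is_derive f t (f' t)) ->
  exists c, Rmin a b <= c <= Rmax a b /\ f b - f a = f' c * (b - a).
Proof.
  intros Hd. apply MVT_gen.
  - intros t Ht. apply Hd. lra.
  - intros t Ht. apply derivable_continuous_pt. exists (f' t).
    apply is_derive_Reals, Hd, Ht.
Qed.

Lemma le_of_derive_sign (f f' : R -> R) (a b : R) :
  (forall t, Rmin a b <= t <= Rmax a b -> is_derive f t (f' t)) ->
  (forall t, Rmin a b <= t <= Rmax a b -> 0 <= f' t * (b - a)) -> f a <= f b.
Proof.
  intros Hd Hs. destruct (mvt_between f f' a b Hd) as [c [Hc Heq]].
  specialize (Hs c Hc). lra.
Qed.

Lemma secant_slopes_antitone (f f' : R -> R) (a b c : R) :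
  a < b < c ->
  (forall t, a <= t <= c -> is_derive f t (f' t)) ->
  (forall s t, a <= s <= t -> t <= c -> f' t <= f' s) ->
  (f c - f b) * (b - a) <= (f b - f a) * (c - b).
Proof.
  intros Habc Hd Hdec.
  destruct (mvt_between f f' a b) as [d1 [Hd1 E1]].
  { intros t Ht. apply Hd. unfold Rmin, Rmax in Ht. destruct (Rle_dec a b); lra. }
  destruct (mvt_between f f' b c) as [d2 [Hd2 E2]].
  { intros t Ht. apply Hd. unfold Rmin, Rmax in Ht. destruct (Rle_dec b c); lra. }
  unfold Rmin, Rmax in Hd1, Hd2.
  destruct (Rle_dec a b); destruct (Rle_dec b c); try lra.
  assert (Hslope : f' d2 <= f' d1) by (apply Hdec; lra).
  rewrite E1, E2.
  assert (0 <= (f' d1 - f' d2) * ((b - a) * (c - b)))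
    by (apply Rmult_le_pos; [lra | apply Rmult_le_pos; lra]).
  nra.
Qed.

Lemma ln_sub_sign (a b w : R) : 0 < a -> 0 < b -> 0 <= (a - b) * w -> 0 <= (ln a - ln b) * w.
Proof.
  intros Ha Hb Hw.
  destruct (Rtotal_order w 0) as [Hw0|[->|Hw0]]; [|lra|].
  - assert (Hab : a <= b).
    { destruct (Rle_dec a b) as [|Hba]; [assumption|].
      assert (0 < (a - b) * - w) by (apply Rmult_lt_0_compat; lra). lra. }
    pose proof (ln_le a b Ha Hab). nra.
  - assert (Hba : b <= a).
    { destruct (Rle_dec b a) as [|Hab]; [assumption|].
      assert (0 < (b - a) * w) by (apply Rmult_lt_0_compat; lra). lra. }
    pose proof (ln_le b a Hb Hba). nra.
Qed.

Definition bern_kl (y p : R) : R := y * ln (y / p) + (1 - y) * ln ((1 - y) / (1 - p)).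

Lemma bern_kl_diag p : 0 < p < 1 -> bern_kl p p = 0.
Proof. intros. unfold bern_kl. rewrite !Rdiv_diag by lra. rewrite ln_1. ring. Qed.

Lemma bern_kl_compl y p : bern_kl (1 - y) (1 - p) = bern_kl y p.
Proof.
  unfold bern_kl. replace (1 - (1 - y)) with y by ring. replace (1 - (1 - p)) with p by ring.
  ring.
Qed.

Lemma bern_kl_mirror p : 0 < p < 1 -> bern_kl (1 - p) p = (1 - 2 * p) * ln ((1 - p) / p).
Proof.
  intros Hp. unfold bern_kl. replace (1 - (1 - p)) with p by ring.
  rewrite !ln_div by lra. ring.
Qed.

Lemma pinsker y p : 0 < y < 1 -> 0 < p < 1 -> 2 * (y - p) ^ 2 <= bern_kl y p.
Proof.
  intros Hy Hp.
  assert (Hin : forall t, Rmin y p <= t <= Rmax y p -> 0 < t < 1)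
    by (intros t Ht; unfold Rmin, Rmax in Ht; destruct (Rle_dec y p); lra).
  enough (bern_kl y y - 2 * (y - y) ^ 2 <= bern_kl y p - 2 * (y - p) ^ 2)
    by (rewrite bern_kl_diag in H by lra; lra).
  apply (le_of_derive_sign (fun q => bern_kl y q - 2 * (y - q) ^ 2)
           (fun t => (t - y) * (1 - 2 * t) ^ 2 / (t * (1 - t)))).
  - intros t Ht. specialize (Hin t Ht). unfold bern_kl. auto_derive.
    + repeat split; try (apply Rdiv_lt_0_compat; lra); lra.
    + field. repeat split; lra.
  - intros t Ht. specialize (Hin t Ht).
    replace ((t - y) * (1 - 2 * t) ^ 2 / (t * (1 - t)) * (p - y))
      with (((t - y) * (p - y)) * ((1 - 2 * t) ^ 2 / (t * (1 - t)))) by (field; lra).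
    apply Rmult_le_pos.
    + unfold Rmin, Rmax in Ht. destruct (Rle_dec y p); nra.
    + apply Rdiv_le_0_compat; [apply pow2_ge_0 | nra].
Qed.

(* The sharp constant of the distribution-dependent Pinsker inequality
   (Ordentlich--Weinberger); the junk value at [p = 1/2] is never used. *)
Definition ow_const (p : R) : R := ln ((1 - p) / p) / (1 - 2 * p).

Lemma ow_const_compl p : 0 < p < 1 -> ow_const (1 - p) = ow_const p.
Proof.
  intros Hp. unfold ow_const. replace (1 - (1 - p)) with p by ring.
  destruct (Req_dec p (1 / 2)) as [->|Hp2].
  - replace (1 - 1 / 2) with (1 / 2) by field. reflexivity.
  - rewrite !ln_div by lra. field. lra.
Qed.

Section RefinedPinsker.

Variable p : R.
Hypothesis Hp : 0 < p < 1 / 2.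

(* The derivative of [y |-> bern_kl y p - ow_const p * (y - p)^2] is
   [tilted_logit y - tilted_logit p]. *)
Definition tilted_logit (t : R) : R := ln (t / (1 - t)) - 2 * ow_const p * t.

Lemma tilted_logit_derive t : 0 < t < 1 ->
  is_derive tilted_logit t (1 / (t * (1 - t)) - 2 * ow_const p).
Proof.
  intros Ht. unfold tilted_logit. auto_derive.
  - repeat split; try lra. apply Rdiv_lt_0_compat; lra.
  - field. repeat split; lra.
Qed.

Lemma tilted_logit_half : tilted_logit (1 / 2) = tilted_logit p.
Proof.
  unfold tilted_logit, ow_const.
  replace (1 / 2 / (1 - 1 / 2)) with 1 by field. rewrite ln_1.
  rewrite !ln_div by lra. field. lra.
Qed.

Lemma tilted_logit_secant a b c : 0 < a < b -> b < c <= 1 / 2 ->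
  (tilted_logit c - tilted_logit b) * (b - a)
  <= (tilted_logit b - tilted_logit a) * (c - b).
Proof.
  intros Hab Hbc.
  apply (secant_slopes_antitone tilted_logit (fun t => 1 / (t * (1 - t)) - 2 * ow_const p)).
  - lra.
  - intros t Ht. apply tilted_logit_derive. lra.
  - intros s t Hs Ht.
    assert (s * (1 - s) <= t * (1 - t)) by nra.
    assert (0 < s * (1 - s)) by nra.
    assert (1 / (t * (1 - t)) <= 1 / (s * (1 - s))).
    { apply Rmult_le_reg_r with (s * (1 - s) * (t * (1 - t))); [nra|].
      field_simplify; nra. }
    lra.
Qed.

Lemma tilted_logit_le t : 0 < t <= p -> tilted_logit t <= tilted_logit p.
Proof.
  intros Ht. destruct (Req_dec t p) as [->|Htp]; [lra|].
  pose proof (tilted_logit_secant t p (1 / 2) ltac:(lra) ltac:(lra)) as H.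
  rewrite tilted_logit_half in H. nra.
Qed.

Lemma tilted_logit_ge t : p <= t <= 1 / 2 -> tilted_logit p <= tilted_logit t.
Proof.
  intros Ht.
  destruct (Req_dec t p) as [->|Htp]; [lra|].
  destruct (Req_dec t (1 / 2)) as [->|Ht2]; [rewrite tilted_logit_half; lra|].
  pose proof (tilted_logit_secant p t (1 / 2) ltac:(lra) ltac:(lra)) as H.
  rewrite tilted_logit_half in H. nra.
Qed.

Lemma pinsker_ow_low_half y : 0 < y <= 1 / 2 -> ow_const p * (y - p) ^ 2 <= bern_kl y p.
Proof.
  intros Hy.
  enough (bern_kl p p - ow_const p * (p - p) ^ 2 <= bern_kl y p - ow_const p * (y - p) ^ 2)
    by (rewrite bern_kl_diag in H by lra; lra).
  apply (le_of_derive_sign (fun y => bern_kl y p - ow_const p * (y - p) ^ 2)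
           (fun t => tilted_logit t - tilted_logit p)).
  - intros t Ht. assert (0 < t < 1) by (unfold Rmin, Rmax in Ht; destruct (Rle_dec p y); lra).
    unfold bern_kl, tilted_logit. auto_derive.
    + repeat split; try (apply Rdiv_lt_0_compat; lra); lra.
    + unfold Rminus. rewrite <- !Rdiv_def, !ln_div by lra. field. lra.
  - intros t Ht. unfold Rmin, Rmax in Ht. destruct (Rle_dec p y).
    + pose proof (tilted_logit_ge t ltac:(lra)). apply Rmult_le_pos; lra.
    + pose proof (tilted_logit_le t ltac:(lra)).
      replace ((tilted_logit t - tilted_logit p) * (y - p))
        with ((tilted_logit p - tilted_logit t) * (p - y)) by ring.
      apply Rmult_le_pos; lra.
Qed.

End RefinedPinsker.

Lemma ow_excess_mirror y p : 0 < y < 1 -> 0 < p < 1 -> p <> 1 / 2 ->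
  bern_kl (1 - y) p - ow_const p * (1 - y - p) ^ 2 = bern_kl y p - ow_const p * (y - p) ^ 2.
Proof.
  intros Hy Hp Hp2. unfold bern_kl, ow_const. replace (1 - (1 - y)) with y by ring.
  rewrite !ln_div by lra. field. lra.
Qed.

Lemma pinsker_ow y p : 0 < p < 1 -> p <> 1 / 2 -> 0 < y < 1 ->
  ow_const p * (y - p) ^ 2 <= bern_kl y p.
Proof.
  intros Hp Hp2 Hy.
  assert (Hlow : forall q z, 0 < q < 1 / 2 -> 0 < z < 1 -> ow_const q * (z - q) ^ 2 <= bern_kl z q).
  { intros q z Hq Hz. destruct (Rle_dec z (1 / 2)).
    - apply pinsker_ow_low_half; lra.
    - pose proof (pinsker_ow_low_half q Hq (1 - z) ltac:(lra)).
      pose proof (ow_excess_mirror z q Hz ltac:(lra) ltac:(lra)). lra. }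
  destruct (Rlt_dec p (1 / 2)); [apply Hlow; lra|].
  rewrite <- bern_kl_compl, <- ow_const_compl by lra.
  replace ((y - p) ^ 2) with ((1 - y - (1 - p)) ^ 2) by ring.
  apply Hlow; lra.
Qed.

Lemma same_side_sign z x c : 0 <= (z - 1 / 2) * (x - 1 / 2) -> Rmin z x <= c <= Rmax z x ->
  0 <= (1 - 2 * c) * (c * (1 - c) - z * (1 - z)) * (x - z).
Proof.
  intros Hzx Hc.
  replace ((1 - 2 * c) * (c * (1 - c) - z * (1 - z)) * (x - z))
    with (((1 - 2 * c) * (1 - c - z)) * ((c - z) * (x - z))) by ring.
  assert (0 <= (c - z) * (x - z)) by (unfold Rmin, Rmax in Hc; destruct (Rle_dec z x); nra).
  assert (0 <= (1 - 2 * c) * (1 - c - z)).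
  { destruct (Rtotal_order z (1 / 2)) as [Hz|[->|Hz]].
    - assert (x <= 1 / 2) by nra.
      unfold Rmin, Rmax in Hc. destruct (Rle_dec z x); apply Rmult_le_pos; lra.
    - replace ((1 - 2 * c) * (1 - c - 1 / 2)) with (2 * ((1 / 2 - c) * (1 / 2 - c))) by field.
      pose proof (Rle_0_sqr (1 / 2 - c)). unfold Rsqr in *. lra.
    - assert (1 / 2 <= x) by nra.
      replace ((1 - 2 * c) * (1 - c - z)) with ((2 * c - 1) * (c + z - 1)) by ring.
      unfold Rmin, Rmax in Hc. destruct (Rle_dec z x); apply Rmult_le_pos; lra. }
  apply Rmult_le_pos; assumption.
Qed.

Lemma one_sub_frac_pos s w : 1 <= s -> 0 < w < 1 -> 0 < 1 - 2 * w / (s + 1).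
Proof.
  intros. replace (1 - 2 * w / (s + 1)) with ((s + 1 - 2 * w) / (s + 1)) by (field; lra).
  apply Rdiv_lt_0_compat; lra.
Qed.

Definition kappa (lam : R) : R := (1 - lam) / (1 + lam).
Definition contract (lam x : R) : R := 1 / 2 + kappa lam * (x - 1 / 2).

Section Contraction.

Variable lam : R.
Hypothesis Hlam : 0 <= lam < 1.

Lemma kappa_pos : 0 < kappa lam.
Proof. unfold kappa. apply Rdiv_lt_0_compat; lra. Qed.

Lemma contract_sub x y : contract lam x - contract lam y = kappa lam * (x - y).
Proof. unfold contract. ring. Qed.

Lemma contract_bounds x : 0 < x < 1 -> 0 < contract lam x < 1.
Proof.
  intros Hx. unfold contract, kappa.
  replace (1 / 2 + (1 - lam) / (1 + lam) * (x - 1 / 2)) with (((1 - lam) * x + lam) / (1 + lam))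
    by (field; lra).
  split.
  - apply Rdiv_lt_0_compat; nra.
  - apply Rmult_lt_reg_r with (1 + lam); [lra|].
    unfold Rdiv. rewrite Rmult_assoc, Rinv_l; nra.
Qed.

Lemma contract_mu mu : contract lam mu * (1 + lam) = mu + (1 - mu) * lam.
Proof. unfold contract, kappa. field. lra. Qed.

Lemma contract_mu_compl mu : (1 - contract lam mu) * (1 + lam) = 1 - mu + mu * lam.
Proof. unfold contract, kappa. field. lra. Qed.

End Contraction.

Section RateFunction.

Variables mu lam : R.
Hypothesis Hmu : 0 < mu < 1.
Hypothesis Hlam : 0 <= lam < 1.

Lemma Delta_ge_1 x : 0 < x < 1 -> 1 <= Defs.Delta mu lam x.
Proof.
  intros Hx. unfold Defs.Delta.
  assert (0 < mu * (1 - mu) * (1 - lam) ^ 2) by (apply Rmult_lt_0_compat; [nra | apply pow_lt; lra]).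
  assert (0 <= 4 * lam * x * (1 - x) / (mu * (1 - mu) * (1 - lam) ^ 2)).
  { apply Rdiv_le_0_compat; [|lra].
    assert (0 <= lam * (x * (1 - x))) by (apply Rmult_le_pos; nra). nra. }
  lra.
Qed.

Lemma sqrt_Delta_ge_1 x : 0 < x < 1 -> 1 <= sqrt (Defs.Delta mu lam x).
Proof. intros Hx. rewrite <- sqrt_1. apply sqrt_le_1_alt, Delta_ge_1, Hx. Qed.

Lemma Delta_derive x : 0 < x < 1 ->
  is_derive (Defs.Delta mu lam) x ((Defs.Delta mu lam x - 1) * (1 - 2 * x) / (x * (1 - x))).
Proof.
  intros Hx. unfold Defs.Delta.
  assert (0 < mu * (1 - mu) * (1 - lam) ^ 2) by (apply Rmult_lt_0_compat; [nra | apply pow_lt; lra]).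
  auto_derive; [lra|]. field. repeat split; lra.
Qed.

Lemma sqrt_Delta_anchor z : z * (1 - z) = mu * (1 - mu) -> sqrt (Defs.Delta mu lam z) = / kappa lam.
Proof.
  intros Hz. pose proof (kappa_pos lam Hlam).
  replace (Defs.Delta mu lam z) with ((/ kappa lam) ^ 2).
  - apply sqrt_pow2. apply Rlt_le, Rinv_0_lt_compat; lra.
  - unfold Defs.Delta, kappa. replace (4 * lam * z * (1 - z)) with (4 * lam * (mu * (1 - mu))) by nra.
    field. repeat split; lra.
Qed.

Definition lden (x : R) : R := 1 - 2 * (1 - x) / (sqrt (Defs.Delta mu lam x) + 1).
Definition rden (x : R) : R := 1 - 2 * x / (sqrt (Defs.Delta mu lam x) + 1).

Lemma lden_pos x : 0 < x < 1 -> 0 < lden x.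
Proof. intros Hx. apply one_sub_frac_pos; [apply sqrt_Delta_ge_1|]; lra. Qed.

Lemma rden_pos x : 0 < x < 1 -> 0 < rden x.
Proof. intros Hx. apply one_sub_frac_pos; [apply sqrt_Delta_ge_1|]; lra. Qed.

Lemma dens_anchor z : z * (1 - z) = mu * (1 - mu) ->
  lden z = (1 + lam) * contract lam z /\ rden z = (1 + lam) * (1 - contract lam z).
Proof.
  intros Hz. unfold lden, rden, contract, kappa. rewrite sqrt_Delta_anchor by exact Hz.
  unfold kappa. split; field; repeat split; lra.
Qed.

Lemma I_theta_anchor z : 0 < z < 1 -> z * (1 - z) = mu * (1 - mu) ->
  I_theta mu lam z = - z * ln (contract lam mu / contract lam z)
                     - (1 - z) * ln ((1 - contract lam mu) / (1 - contract lam z)).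
Proof.
  intros Hz Hzmu. destruct (dens_anchor z Hzmu) as [Hl Hr].
  pose proof (contract_bounds lam Hlam z Hz). pose proof (contract_bounds lam Hlam mu Hmu).
  unfold I_theta. fold (lden z) (rden z).
  rewrite Hl, Hr, <- (contract_mu lam Hlam mu), <- (contract_mu_compl lam Hlam mu).
  replace (contract lam mu * (1 + lam) / ((1 + lam) * contract lam z))
    with (contract lam mu / contract lam z) by (field; lra).
  replace ((1 - contract lam mu) * (1 + lam) / ((1 + lam) * (1 - contract lam z)))
    with ((1 - contract lam mu) / (1 - contract lam z)) by (field; lra).
  reflexivity.
Qed.

(* Differentiating the two denominators contributes [x lden'/lden + (1-x) rden'/rden],
   which vanishes identically once [sqrt Delta ^ 2 = Delta] is used. *)
Lemma I_theta_derive x : 0 < x < 1 ->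
  is_derive (I_theta mu lam) x
    (ln ((1 - mu + mu * lam) / rden x) - ln ((mu + (1 - mu) * lam) / lden x)).
Proof.
  intros Hx.
  pose proof (Delta_ge_1 x Hx) as HD. pose proof (Delta_derive x Hx) as HdD.
  pose proof (sqrt_Delta_ge_1 x Hx) as Hs1.
  assert (Hss : sqrt (Defs.Delta mu lam x) * sqrt (Defs.Delta mu lam x) = Defs.Delta mu lam x)
    by (apply sqrt_sqrt; lra).
  assert (0 < mu + (1 - mu) * lam) by nra.
  assert (0 < 1 - mu + mu * lam) by nra.
  pose proof (lden_pos x Hx) as Hl. pose proof (rden_pos x Hx) as Hr.
  unfold lden, rden, Rminus, Rdiv in Hl, Hr.
  unfold I_theta, lden, rden. auto_derive.
  - assert (ex_derive (Defs.Delta mu lam) x) by (eexists; exact HdD).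
    repeat split; try lra; try assumption;
      apply Rmult_lt_0_compat; try lra; apply Rinv_0_lt_compat; lra.
  - assert (HD' : Derive (fun t => Defs.Delta mu lam t) x
                  = (Defs.Delta mu lam x - 1) * (1 - 2 * x) / (x * (1 - x)))
      by (apply is_derive_unique; exact HdD).
    rewrite HD'.
    unfold Rdiv, Rminus.
    set (s := sqrt (Defs.Delta mu lam x)) in *.
    set (L1 := ln _). set (L2 := ln (_ * / (1 + - (2 * x * / (s + 1))))).
    rewrite <- Hss. clearbody s. clear HdD.
    field. repeat split; lra.
Qed.

Definition rate_gap (x : R) : R :=
  I_theta mu lam x - bern_kl (contract lam x) (contract lam mu) / kappa lam.

Lemma rate_gap_derive x : 0 < x < 1 ->
  is_derive rate_gap x
    (ln (lden x * (1 - contract lam x)) - ln (rden x * contract lam x)).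
Proof.
  intros Hx. pose proof (kappa_pos lam Hlam).
  pose proof (contract_bounds lam Hlam x Hx) as HY. pose proof (contract_bounds lam Hlam mu Hmu) as Hp.
  pose proof (lden_pos x Hx). pose proof (rden_pos x Hx).
  set (p := contract lam mu) in *. set (Y := contract lam x) in *.
  assert (HK : is_derive (fun t => bern_kl (contract lam t) p / kappa lam) x
                 (ln (Y / p) - ln ((1 - Y) / (1 - p)))).
  { assert (EY : 1 / 2 + kappa lam * (x + - (1 / 2)) = Y) by (unfold Y, contract; ring).
    unfold bern_kl, contract. auto_derive; rewrite EY, <- ?Rdiv_def.
    - repeat split; apply Rdiv_lt_0_compat; lra.
    - unfold Rminus. field. repeat split; lra. }
  pose proof (is_derive_minus _ _ x _ _ (I_theta_derive x Hx) HK) as HD.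
  unfold minus, plus, opp in HD; simpl in HD.
  replace (ln (lden x * (1 - Y)) - ln (rden x * Y))
    with (ln ((1 - mu + mu * lam) / rden x) - ln ((mu + (1 - mu) * lam) / lden x)
          - (ln (Y / p) - ln ((1 - Y) / (1 - p)))).
  - exact HD.
  - rewrite <- (contract_mu lam Hlam mu), <- (contract_mu_compl lam Hlam mu). fold p.
    rewrite !ln_div, !ln_mult by nra. ring.
Qed.

Lemma rate_gap_slope_sign x w : 0 < x < 1 ->
  0 <= (1 - 2 * x) * (x * (1 - x) - mu * (1 - mu)) * w ->
  0 <= (lden x * (1 - contract lam x) - rden x * contract lam x) * w.
Proof.
  intros Hx Hw.
  pose proof (sqrt_Delta_ge_1 x Hx) as Hs1.
  assert (Hss : sqrt (Defs.Delta mu lam x) * sqrt (Defs.Delta mu lam x) = Defs.Delta mu lam x)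
    by (apply sqrt_sqrt; pose proof (Delta_ge_1 x Hx); lra).
  unfold lden, rden. set (s := sqrt (Defs.Delta mu lam x)) in *.
  set (T := (1 - lam) * s - (1 + lam)). set (P := (1 - lam) * s + (1 + lam)).
  assert (HP : 0 < P) by (unfold P; nra).
  assert (E1 : (1 - 2 * (1 - x) / (s + 1)) * (1 - contract lam x)
               - (1 - 2 * x / (s + 1)) * contract lam x
               = (1 - 2 * x) * T / ((s + 1) * (1 + lam)))
    by (unfold T, contract, kappa; field; lra).
  assert (E2 : T * P = 4 * lam * (x * (1 - x) - mu * (1 - mu)) / (mu * (1 - mu))).
  { replace (T * P) with ((1 - lam) ^ 2 * (s * s) - (1 + lam) ^ 2) by (unfold T, P; ring).
    rewrite Hss. unfold Defs.Delta. field. repeat split; lra. }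
  assert (HTw : 0 <= (1 - 2 * x) * T * w).
  { apply Rmult_le_reg_r with P; [exact HP|]. rewrite Rmult_0_l.
    replace ((1 - 2 * x) * T * w * P)
      with (4 * lam / (mu * (1 - mu)) * ((1 - 2 * x) * (x * (1 - x) - mu * (1 - mu)) * w))
      by (replace ((1 - 2 * x) * T * w * P) with ((1 - 2 * x) * w * (T * P)) by ring;
          rewrite E2; field; nra).
    apply Rmult_le_pos; [apply Rdiv_le_0_compat; nra | exact Hw]. }
  rewrite E1.
  replace ((1 - 2 * x) * T / ((s + 1) * (1 + lam)) * w)
    with ((1 - 2 * x) * T * w / ((s + 1) * (1 + lam))) by (field; lra).
  apply Rdiv_le_0_compat; nra.
Qed.

Lemma rate_gap_mu : rate_gap mu = 0.
Proof.
  pose proof (contract_bounds lam Hlam mu Hmu).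
  unfold rate_gap. rewrite I_theta_anchor, bern_kl_diag by (reflexivity || lra).
  rewrite !Rdiv_diag, ln_1 by lra. field. pose proof (kappa_pos lam Hlam). lra.
Qed.

Lemma rate_gap_mirror : rate_gap (1 - mu) = 0.
Proof.
  pose proof (contract_bounds lam Hlam mu Hmu) as Hp. pose proof (kappa_pos lam Hlam).
  assert (HY : contract lam (1 - mu) = 1 - contract lam mu) by (unfold contract; field).
  assert (H2p : 1 - 2 * contract lam mu = kappa lam * (1 - 2 * mu)) by (unfold contract; field).
  unfold rate_gap. rewrite I_theta_anchor by (ring || lra).
  rewrite HY, bern_kl_mirror, H2p by lra.
  replace (1 - (1 - contract lam mu)) with (contract lam mu) by ring.
  rewrite !ln_div by lra. field. lra.
Qed.

Lemma kl_contract_le_I_theta x : 0 < x < 1 ->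
  bern_kl (contract lam x) (contract lam mu) / kappa lam <= I_theta mu lam x.
Proof.
  intros Hx.
  assert (Hz : exists z, 0 < z < 1 /\ z * (1 - z) = mu * (1 - mu) /\
                 0 <= (z - 1 / 2) * (x - 1 / 2) /\ rate_gap z = 0).
  { destruct (Rle_dec 0 ((mu - 1 / 2) * (x - 1 / 2))).
    - exists mu. repeat split; try lra. apply rate_gap_mu.
    - exists (1 - mu). repeat split; try lra; try ring. apply rate_gap_mirror. }
  destruct Hz as [z [Hz [Hzmu [Hside Hgap]]]].
  enough (rate_gap z <= rate_gap x) by (unfold rate_gap in *; lra).
  apply (le_of_derive_sign rate_gap
           (fun t => ln (lden t * (1 - contract lam t)) - ln (rden t * contract lam t))).
  - intros t Ht. apply rate_gap_derive.
    unfold Rmin, Rmax in Ht. destruct (Rle_dec z x); lra.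
  - intros t Ht.
    assert (Ht01 : 0 < t < 1) by (unfold Rmin, Rmax in Ht; destruct (Rle_dec z x); lra).
    pose proof (contract_bounds lam Hlam t Ht01). pose proof (lden_pos t Ht01). pose proof (rden_pos t Ht01).
    apply ln_sub_sign; try nra.
    apply rate_gap_slope_sign; [exact Ht01|].
    rewrite <- Hzmu. apply same_side_sign; assumption.
Qed.

Lemma g_ratio_mirror : mu <> 1 / 2 ->
  g_ratio mu lam (1 - mu) = kappa lam * ow_const (contract lam mu).
Proof.
  intros Hmu2. pose proof (contract_bounds lam Hlam mu Hmu) as Hp. pose proof (kappa_pos lam Hlam).
  pose proof rate_gap_mirror as Hgap. unfold rate_gap in Hgap.
  assert (HY : contract lam (1 - mu) = 1 - contract lam mu) by (unfold contract; field).
  assert (H2p : 1 - 2 * contract lam mu = kappa lam * (1 - 2 * mu)) by (unfold contract; field).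
  rewrite HY, bern_kl_mirror in Hgap by lra.
  unfold g_ratio, ow_const. rewrite H2p.
  replace (I_theta mu lam (1 - mu))
    with ((1 - 2 * contract lam mu) * ln ((1 - contract lam mu) / contract lam mu) / kappa lam)
    by lra.
  rewrite H2p. field. repeat split; lra.
Qed.

Lemma I_theta_ge_of_kl_ge c x : 0 < x < 1 ->
  c * (contract lam x - contract lam mu) ^ 2 <= bern_kl (contract lam x) (contract lam mu) ->
  kappa lam * c * (x - mu) ^ 2 <= I_theta mu lam x.
Proof.
  intros Hx Hc. pose proof (kappa_pos lam Hlam).
  apply Rle_trans with (bern_kl (contract lam x) (contract lam mu) / kappa lam);
    [|apply kl_contract_le_I_theta; assumption].
  replace (kappa lam * c * (x - mu) ^ 2) with (c * (contract lam x - contract lam mu) ^ 2 / kappa lam)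
    by (rewrite contract_sub; field; lra).
  unfold Rdiv. apply Rmult_le_compat_r; [apply Rlt_le, Rinv_0_lt_compat|]; assumption.
Qed.

End RateFunction.

Theorem mainTheorem4 (mu lam : R) (Hmu : 0 < mu < 1) (Hlam : 0 <= lam < 1) :
  (forall x : R, 0 < x < 1 ->
     I_theta mu lam x >= 2 * ((1 - lam) / (1 + lam)) * (x - mu) ^ 2) /\
  (mu <> 1 / 2 ->
     forall x : R, 0 < x < 1 -> x <> mu ->
       g_ratio mu lam (1 - mu) <= g_ratio mu lam x).
Proof.
  pose proof (kappa_pos lam Hlam) as Hk.
  split.
  - intros x Hx. apply Rle_ge.
    replace (2 * ((1 - lam) / (1 + lam))) with (kappa lam * 2) by (unfold kappa; ring).
    apply I_theta_ge_of_kl_ge; try assumption.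
    apply pinsker; apply contract_bounds; assumption.
  - intros Hmu2 x Hx Hxmu.
    assert (Hp2 : contract lam mu <> 1 / 2).
    { intro E. assert (Hc : contract lam mu - 1 / 2 = kappa lam * (mu - 1 / 2))
        by (unfold contract; ring).
      rewrite E, Rminus_diag in Hc. destruct (Rmult_integral _ _ (eq_sym Hc)); lra. }
    assert (Hx2 : 0 < (x - mu) ^ 2).
    { replace ((x - mu) ^ 2) with (Rsqr (x - mu)) by (unfold Rsqr; ring).
      apply Rsqr_pos_lt. lra. }
    rewrite g_ratio_mirror by assumption. unfold g_ratio.
    apply Rmult_le_reg_r with ((x - mu) ^ 2); [exact Hx2|].
    replace (I_theta mu lam x / (x - mu) ^ 2 * (x - mu) ^ 2) with (I_theta mu lam x) by (field; lra).
    apply I_theta_ge_of_kl_ge; try assumption.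
    apply pinsker_ow; try apply contract_bounds; assumption.
Qed.
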